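(* Let $G$ be a cactus. Then $G$ is in $B_0$ if and only if $G$ contains none of $M_2$, $M_3$, and $C_r$ for any $r\ge 4$ as an induced subgraph.
   Context: A cactus is a connected graph in which any two simple cycles have at most one vertex in common. $C_r$ denotes the cycle on $r$ vertices. $M_2$ is the graph on vertices $a,b,c,d,e,f,g$ with edges $ab,ac,ad,be,cf,dg$. $M_3$ is the graph on vertices $a,b,c,d,e,f$ with edges $ab,ac,bc,ad,be,cf$. $B_0$ is the class of graphs having an EPG representation (a set of paths on a rectangular grid, one per vertex, two vertices adjacent iff their paths share a grid edge) in which no path has a bend. *)

From mathcomp Require Import all_boot all_order all_algebra.
Set Implicit Arguments. Unset Strict Implicit. Unset Printing Implicit Defensive.
Import GRing.Theory Num.Theory.

Definition simple_graph (T : finType) (e : rel T) : Prop :=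
  symmetric e /\ irreflexive e.

Definition connected_graph (T : finType) (e : rel T) : Prop :=
  forall x y : T, connect e x y.

Definition simple_cycle (T : finType) (e : rel T) (s : seq T) : Prop :=
  [/\ 3 <= size s, uniq s & cycle e s].

Definition cycle_edges (T : finType) (s : seq T) : {set T * T} :=
  [set p | (p.1 \in s) && ((next s p.1 == p.2) || (next s p.2 == p.1))].

(* Cactus: connected graph in which any two (distinct) simple cycles
   have at most one vertex in common. Two cycles are the same subgraph
   iff they have the same edge set. *)
Definition cactus (T : finType) (e : rel T) : Prop :=
  [/\ simple_graph e, connected_graph e &
    forall s1 s2 : seq T, simple_cycle e s1 -> simple_cycle e s2 ->
      cycle_edges s1 != cycle_edges s2 ->
      #|[set x | (x \in s1) && (x \in s2)]| <= 1].

Definition induced_sub (U : finType) (h : rel U) (T : finType) (e : rel T) : Prop :=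
  exists f : U -> T, injective f /\ forall x y : U, e (f x) (f y) = h x y.

Definition Cr_rel (r : nat) : rel 'I_r :=
  fun i j => ((i.+1 %% r) == j) || ((j.+1 %% r) == i).

(* M2: a=0,b=1,c=2,d=3,e=4,f=5,g=6; edges ab ac ad be cf dg. *)
Definition M2_edges : seq (nat * nat) :=
  [:: (0,1); (0,2); (0,3); (1,4); (2,5); (3,6)]%N.
Definition M2_rel : rel 'I_7 :=
  fun i j => ((val i, val j) \in M2_edges) || ((val j, val i) \in M2_edges).

(* M3: a=0,b=1,c=2,d=3,e=4,f=5; edges ab ac bc ad be cf. *)
Definition M3_edges : seq (nat * nat) :=
  [:: (0,1); (0,2); (1,2); (0,3); (1,4); (2,5)]%N.
Definition M3_rel : rel 'I_6 :=
  fun i j => ((val i, val j) \in M3_edges) || ((val j, val i) \in M3_edges).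

(* A grid edge: its lower/left endpoint and a direction
   (false = horizontal, from (x,y) to (x+1,y); true = vertical, to (x,y+1)). *)
Definition grid_edge : Type := ((int * int) * bool)%type.

(* A path on the grid with no bend: a straight segment starting at point
   [start], going in direction [dir] (right or up), with [len] >= 1 grid edges. *)
Record straight_path := StraightPath {
  sp_start : int * int;
  sp_dir : bool;
  sp_len : nat }.

Definition sp_step (d : bool) (k : nat) (p : int * int) : int * int :=
  if d then (p.1, p.2 + k%:Z)%R else (p.1 + k%:Z, p.2)%R.

Definition on_path (P : straight_path) (g : grid_edge) : Prop :=
  exists2 k : nat, (k < sp_len P)%N &
    g = (sp_step (sp_dir P) k (sp_start P), sp_dir P).

Definition B0 (T : finType) (e : rel T) : Prop :=
  exists P : T -> straight_path,
    (forall v, (0 < sp_len (P v))%N) /\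
    forall u v : T, u != v ->
      (e u v <-> exists g : grid_edge, on_path (P u) g /\ on_path (P v) g).

From mathcomp Require Import all_boot all_order all_algebra.
From mathcomp Require Import zify.
Set Implicit Arguments. Unset Strict Implicit. Unset Printing Implicit Defensive.
Import GRing.Theory Num.Theory Order.TTheory.

(* If a connected graph has a B_0-EPG representation, adjacent vertices lie on the same grid
   line, so all paths do and the graph is an interval graph.  Interval graphs have no asteroidal
   triple, which rules out M_2 and M_3, and a vertex whose interval ends first is simplicial,
   which rules out C_r for r >= 4; B_0 is inherited by induced subgraphs.

   Conversely, in a cactus without induced C_r (r >= 4) every cycle is a triangle.  Hence in the
   breadth-first layers around a vertex a, every vertex has a unique parent, adjacent vertices of
   one layer have the same parent, and a vertex has at most one neighbour in its own layer.  When
   a is an end of a longest shortest path a..b, at most one vertex per layer has children: two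
   such vertices produce an induced M_3 or M_2 around their last common ancestor, or, close to a,
   a set of vertices avoiding b, cut off by edges of small depth, which would make b too close to
   a deep vertex.  Listing the vertices layer by layer, with layer neighbours side by side and the
   vertex with children (and its layer neighbour) last, gives an ordering in which every
   neighbourhood to the right is an initial segment, and such an ordering is an interval
   representation on one grid line. *)

(** * Straight paths and interval graphs *)

Definition sp_line (P : straight_path) : int :=
  if sp_dir P then (sp_start P).1 else (sp_start P).2.
Definition sp_first (P : straight_path) : int :=
  if sp_dir P then (sp_start P).2 else (sp_start P).1.
Definition sp_last (P : straight_path) : int := (sp_first P + (sp_len P)%:Z - 1)%R.

Definition grid_point (d : bool) (l x : int) : int * int := if d then (l, x) else (x, l).

Lemma grid_point_inj d l l' x x' : grid_point d l x = grid_point d l' x' -> l = l' /\ x = x'.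
Proof. by case: d => -[-> ->]. Qed.

Lemma on_pathP P g : on_path P g <->
  exists2 x : int, (sp_first P <= x <= sp_last P)%R &
    g = (grid_point (sp_dir P) (sp_line P) x, sp_dir P).
Proof.
have stepE k : sp_step (sp_dir P) k (sp_start P) =
               grid_point (sp_dir P) (sp_line P) (sp_first P + k%:Z).
  by case: P => -[x y] [].
rewrite /on_path /sp_last; split=> [[k lt_k ->]|[x /andP[lo_x hi_x] ->]].
  by exists (sp_first P + k%:Z)%R; rewrite ?stepE //; apply/andP; split; lia.
exists `|x - sp_first P|%N; first lia.
by rewrite stepE; congr (grid_point _ _ _, _); lia.
Qed.

Lemma straight_paths_shareP P Q : (0 < sp_len P)%N -> (0 < sp_len Q)%N ->
  (exists g, on_path P g /\ on_path Q g) <->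
  [/\ sp_dir P = sp_dir Q, sp_line P = sp_line Q,
      (sp_first P <= sp_last Q)%R & (sp_first Q <= sp_last P)%R].
Proof.
move=> P_pos Q_pos; split.
  case=> g [/on_pathP[x /andP[lo_x hi_x] ->] /on_pathP[y /andP[lo_y hi_y]]].
  case=> /[swap] <- /grid_point_inj[-> eq_xy]; split=> //; lia.
case=> eq_d eq_l le_PQ le_QP.
have [x [x_geP x_geQ x_eq]] : exists x : int,
    [/\ sp_first P <= x, sp_first Q <= x & x = sp_first P \/ x = sp_first Q]%R.
  by case: (lerP (sp_first P) (sp_first Q)) => h;
    [exists (sp_first Q) | exists (sp_first P)]; split; auto; lia.
have [le_P le_Q] : (sp_first P <= sp_last P /\ sp_first Q <= sp_last Q)%R.
  by rewrite /sp_last; split; lia.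
exists (grid_point (sp_dir P) (sp_line P) x, sp_dir P).
by split; apply/on_pathP; exists x; rewrite ?eq_d ?eq_l //; apply/andP; split; lia.
Qed.

Lemma B0_induced (U T : finType) (h : rel U) (e : rel T) :
  induced_sub h e -> B0 e -> B0 h.
Proof.
case=> f [f_inj f_e] [P [P_pos P_e]]; exists (P \o f); split=> [x|x y neq_xy]; first exact: P_pos.
by rewrite -f_e; apply: P_e; rewrite (inj_eq f_inj).
Qed.

Definition interval_model (U : finType) (h : rel U) (lo hi : U -> int) : Prop :=
  (forall x, lo x <= hi x)%R /\
  forall x y, x != y -> h x y = (lo x <= hi y)%R && (lo y <= hi x)%R.

Lemma connected_B0_interval (U : finType) (h : rel U) :
  connected_graph h -> B0 h -> exists lo hi, interval_model h lo hi.
Proof.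
move=> h_conn [P [P_pos P_h]].
pose line x := (sp_dir (P x), sp_line (P x)).
have line_edge x y : h x y -> line x = line y.
  case: (eqVneq x y) => [-> //|neq_xy /(P_h _ _ neq_xy)].
  by case/straight_paths_shareP => // eq_d eq_l _ _; rewrite /line eq_d eq_l.
have line_const x y : line x = line y.
  have closed_line : closed h [pred z | line z == line x].
    by move=> u v /line_edge; rewrite !inE => ->.
  by have := closed_connect closed_line (h_conn x y); rewrite !inE eqxx => /esym/eqP.
exists (sp_first \o P), (sp_last \o P); split=> [x|x y neq_xy] /=.
  by have := P_pos x; rewrite /sp_last; lia.
have [eq_d eq_l] : sp_dir (P x) = sp_dir (P y) /\ sp_line (P x) = sp_line (P y).
  by case: (line_const x y).
apply/idP/idP => [/(P_h _ _ neq_xy)|/andP[le1 le2]].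
  by case/straight_paths_shareP => // _ _ le1 le2; apply/andP.
by apply/(P_h _ _ neq_xy)/straight_paths_shareP.
Qed.

Definition far (U : finType) (h : rel U) (x y : U) := (x != y) && ~~ h x y.

Definition avoiding_path (U : finType) (h : rel U) (w x y : U) : Prop :=
  exists p, [/\ path h x p, last x p = y & all (fun z => far h z w) p].

Definition asteroidal_triple (U : finType) (h : rel U) (x y z : U) : Prop :=
  [/\ [&& far h x y, far h y z & far h x z],
      avoiding_path h y x z, avoiding_path h x y z & avoiding_path h z x y].

Section IntervalModel.
Variables (U : finType) (h : rel U) (lo hi : U -> int).
Hypothesis model : interval_model h lo hi.

Definition between x y z :=
  (((hi x < lo y) && (hi y < lo z)) || ((hi z < lo y) && (hi y < lo x)))%R.

Lemma far_disjoint x y : far h x y -> ((hi x < lo y) || (hi y < lo x))%R.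
Proof. by case/andP=> neq_xy; rewrite model.2 //; have := model.1 x; lia. Qed.

Lemma adj_overlap x y : h x y -> ((lo x <= hi y) && (lo y <= hi x))%R.
Proof.
case: (eqVneq x y) => [-> _|neq_xy]; last by rewrite model.2.
by have := model.1 y; lia.
Qed.

Lemma interval_path_meets x y z p :
  between x y z -> path h x p -> last x p = z -> ~~ all (fun q => far h q y) p.
Proof.
move: (model.1 y) (model.1 z) => lo_y lo_z.
elim: p x => [|q p IHp] x /=.
  by move=> btw _ eq_xz; move: btw; rewrite -eq_xz /between; have := model.1 x; lia.
move=> btw /andP[/adj_overlap ov_xq path_q] last_z; apply/negP => /andP[far_qy all_p].
suff btw_q : between q y z by have := IHp q btw_q path_q last_z; rewrite all_p.
have := far_disjoint far_qy; have := model.1 q; have := model.1 x.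
by move: btw; rewrite /between; lia.
Qed.

Lemma interval_AT_free x y z : ~ asteroidal_triple h x y z.
Proof.
case=> /and3P[/far_disjoint dxy /far_disjoint dyz /far_disjoint dxz].
move=> [p1 [h1 l1 a1]] [p2 [h2 l2 a2]] [p3 [h3 l3 a3]].
move: (model.1 x) (model.1 y) (model.1 z) => lo_x lo_y lo_z.
have : [|| between x y z, between y x z | between x z y] by rewrite /between; lia.
case/or3P => [/interval_path_meets/(_ h1 l1)|/interval_path_meets/(_ h2 l2)|
              /interval_path_meets/(_ h3 l3)]; by rewrite ?a1 ?a2 ?a3.
Qed.

Lemma interval_simplicial m u v : (forall x, hi m <= hi x)%R ->
  m != u -> m != v -> u != v -> h m u -> h m v -> h u v.
Proof.
move=> hi_min neq_mu neq_mv neq_uv; rewrite !model.2 //.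
by have := hi_min u; have := hi_min v; lia.
Qed.

End IntervalModel.

Lemma connected_walk (U : finType) (h : rel U) x p :
  symmetric h -> path h x p -> (forall y, y \in x :: p) -> connected_graph h.
Proof.
move=> h_sym walk covers y z; apply: (@connect_trans _ _ x).
  by rewrite (sym_connect_sym h_sym); apply: path_connect walk _ (covers y).
exact: path_connect walk _ (covers z).
Qed.

Local Notation v7 i := (@Ordinal 7 i isT).
Local Notation v6 i := (@Ordinal 6 i isT).

Lemma M2_connected : connected_graph M2_rel.
Proof.
apply: (@connected_walk _ _ (v7 0)
  [:: v7 1; v7 4; v7 1; v7 0; v7 2; v7 5; v7 2; v7 0; v7 3; v7 6]) => //.
  by move=> i j; rewrite /M2_rel orbC.
by case=> -[|[|[|[|[|[|[|]]]]]]].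
Qed.

Lemma M3_connected : connected_graph M3_rel.
Proof.
apply: (@connected_walk _ _ (v6 0) [:: v6 3; v6 0; v6 1; v6 4; v6 1; v6 2; v6 5]) => //.
  by move=> i j; rewrite /M3_rel orbC.
by case=> -[|[|[|[|[|[|]]]]]].
Qed.

Lemma M2_asteroidal : asteroidal_triple M2_rel (v7 4) (v7 5) (v7 6).
Proof.
split=> //; [exists [:: v7 1; v7 0; v7 3; v7 6] | exists [:: v7 2; v7 0; v7 3; v7 6]
            | exists [:: v7 1; v7 0; v7 2; v7 5]] => //.
Qed.

Lemma M3_asteroidal : asteroidal_triple M3_rel (v6 3) (v6 4) (v6 5).
Proof.
split=> //; [exists [:: v6 0; v6 2; v6 5] | exists [:: v6 1; v6 2; v6 5]
            | exists [:: v6 0; v6 1; v6 4]] => //.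
Qed.

Lemma M2_not_B0 : ~ B0 M2_rel.
Proof.
case/(connected_B0_interval M2_connected) => lo [hi model].
apply: (interval_AT_free model); exact: M2_asteroidal.
Qed.

Lemma M3_not_B0 : ~ B0 M3_rel.
Proof.
case/(connected_B0_interval M3_connected) => lo [hi model].
apply: (interval_AT_free model); exact: M3_asteroidal.
Qed.

Lemma Cr_relE r (i j : 'I_r) : Cr_rel i j = (ordS i == j) || (ordS j == i).
Proof. by []. Qed.

Lemma val_iter_ordS r (i : 'I_r) k : val (iter k (@ordS r) i) = (i + k) %% r.
Proof.
elim: k => [|k IHk]; first by rewrite addn0 modn_small.
by rewrite iterS /= IHk -addn1 modnDml addn1 addnS.
Qed.

Lemma iter_ordS_neq r (i : 'I_r) k : 0 < k < r -> iter k (@ordS r) i != i.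
Proof.
case/andP=> k_gt0 lt_kr; apply/eqP => /(congr1 val); rewrite val_iter_ordS => eq_i.
have /eqP : i + k = i + 0 %[mod r] by rewrite eq_i addn0 modn_small.
by rewrite eqn_modDl mod0n modn_small // => /eqP k0; rewrite k0 in k_gt0.
Qed.

Lemma Cr_connected r : connected_graph (Cr_rel (r:=r)).
Proof.
move=> i j; have -> : j = iter (j + r - i) (@ordS r) i.
  apply: val_inj; rewrite val_iter_ordS.
  have -> : i + (j + r - i) = j + r by have := ltn_ord i; lia.
  by rewrite modnDr modn_small.
elim: (j + r - i) => [|k IHk]; first exact: connect0.
by apply: connect_trans IHk (connect1 _); rewrite Cr_relE iterS eqxx.
Qed.

Lemma Cr_not_B0 r : 4 <= r -> ~ B0 (Cr_rel (r:=r)).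
Proof.
move=> r_ge4 /(connected_B0_interval (@Cr_connected r)) [lo [hi model]].
have r_gt0 : 0 < r by lia.
have [m _ hi_min] := @arg_minP _ _ _ (Ordinal r_gt0) xpredT hi isT.
have [n1 n2 n3] : [/\ ordS m != m, ordS (ordS m) != m & ordS (ordS (ordS m)) != m].
  by split; [apply: (iter_ordS_neq m (k := 1)) | apply: (iter_ordS_neq m (k := 2))
            | apply: (iter_ordS_neq m (k := 3))]; lia.
have ordS_eq := inj_eq (@ordS_inj r).
have /negP[] : ~~ Cr_rel (ordS m) (ord_pred m).
  by rewrite Cr_relE -ordS_eq ord_predK (negbTE n3) eq_sym (negbTE n1).
apply: (interval_simplicial model (fun x => hi_min x isT)).
- by rewrite eq_sym n1.
- by rewrite -ordS_eq ord_predK.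
- by rewrite -ordS_eq ord_predK.
- by rewrite Cr_relE eqxx.
- by rewrite Cr_relE ord_predK eqxx orbT.
Qed.

Lemma B0_forbidden_free (T : finType) (e : rel T) : B0 e ->
  [/\ ~ induced_sub M2_rel e, ~ induced_sub M3_rel e &
      forall r, 4 <= r -> ~ induced_sub (Cr_rel (r:=r)) e].
Proof.
move=> e_B0; split=> [/B0_induced/(_ e_B0)|/B0_induced/(_ e_B0)|r r_ge4 /B0_induced/(_ e_B0)].
- exact: M2_not_B0.
- exact: M3_not_B0.
- exact: Cr_not_B0.
Qed.

(** * Umbrella-free orderings *)

Section UmbrellaOrdering.
Variables (U : finType) (h : rel U) (pos : U -> nat).
Hypotheses (h_sym : symmetric h) (pos_inj : injective pos).
Hypothesis umbrella : forall i j k, pos i < pos j -> pos j < pos k -> h i k -> h i j.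

Definition reach v := \max_(u | h v u) (pos u - pos v).

Lemma umbrella_adj_lt u v : pos u < pos v -> h u v = (pos v <= pos u + reach u).
Proof.
move=> lt_uv; apply/idP/idP => [h_uv|le_v].
  by have := @leq_bigmax_cond _ (h u) (fun w => pos w - pos u) v h_uv; rewrite -/(reach u); lia.
apply/negPn/negP => n_uv.
suff : reach u <= (pos v - pos u).-1 by lia.
apply/bigmax_leqP => w h_uw.
have [lt_wv|ge_wv] := ltnP (pos w) (pos v); first by lia.
have lt_vw : pos v < pos w.
  by rewrite ltn_neqAle ge_wv andbT; apply: contraNneq n_uv => /pos_inj ->.
by move: n_uv; rewrite (umbrella lt_uv lt_vw h_uw).
Qed.

Lemma umbrella_adj u v : u != v ->
  h u v = (pos u <= pos v + reach v) && (pos v <= pos u + reach u).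
Proof.
move=> neq_uv; case: (ltngtP (pos u) (pos v)) => [lt_uv|lt_vu|/pos_inj eq_uv].
- by rewrite umbrella_adj_lt // (leq_trans (ltnW lt_uv) (leq_addr _ _)).
- by rewrite h_sym umbrella_adj_lt // (leq_trans (ltnW lt_vu) (leq_addr _ _)) andbT.
- by rewrite eq_uv eqxx in neq_uv.
Qed.

Lemma umbrella_B0 : B0 h.
Proof.
exists (fun v => StraightPath (Posz (pos v), Posz 0) false (reach v).+1).
split=> // u v neq_uv; rewrite umbrella_adj // straight_paths_shareP //.
rewrite /sp_last /sp_line /sp_first /=; split.
  by case/andP=> le_uv le_vu; split=> //; lia.
by case=> _ _ le_uv le_vu; apply/andP; split; lia.
Qed.

End UmbrellaOrdering.

(** * Cycles of a cactus *)

Section CactusCycles.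
Variables (T : finType) (e : rel T).
Hypotheses (e_sym : symmetric e) (e_irr : irreflexive e).
Hypothesis cactus_cycles : forall s1 s2 : seq T, simple_cycle e s1 -> simple_cycle e s2 ->
  cycle_edges s1 != cycle_edges s2 -> #|[set x | (x \in s1) && (x \in s2)]| <= 1.

Lemma cactus_cycles_sub s1 s2 x y : simple_cycle e s1 -> simple_cycle e s2 ->
  x != y -> x \in s1 -> y \in s1 -> x \in s2 -> y \in s2 -> {subset s1 <= s2}.
Proof.
move=> c1 c2 neq_xy x1 y1 x2 y2 z z1; apply/negPn/negP => z2.
have /eqP same_edges : cycle_edges s1 == cycle_edges s2.
  apply/negPn/negP => /(cactus_cycles c1 c2); apply/negP; rewrite -ltnNge.
  have xy_sub : [set x; y] \subset [set z | (z \in s1) && (z \in s2)].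
    by apply/subsetP => u; rewrite !inE => /orP[] /eqP ->; apply/andP.
  by have := subset_leq_card xy_sub; rewrite cards2 neq_xy.
have : (z, next s1 z) \in cycle_edges s1 by rewrite inE /= z1 eqxx.
by rewrite same_edges inE /= (negbTE z2).
Qed.

Lemma edge_neq u v : e u v -> u != v.
Proof. by apply: contraTneq => ->; rewrite e_irr. Qed.

Lemma chord_cycle x A y B : uniq (x :: A ++ y :: B) -> cycle e (x :: A ++ y :: B) ->
  e x y -> A != [::] -> simple_cycle e (x :: rcons A y).
Proof.
move=> uniq_s cycle_s e_xy nA; split.
- by rewrite /= size_rcons !ltnS lt0n size_eq0.
- have -> : x :: rcons A y = take (size A).+2 (x :: A ++ y :: B).
    by rewrite /= take_cat ltnNge leqnSn /= subSnn /= take0 cats1.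
  exact: take_uniq.
- move: cycle_s; rewrite /= rcons_cat cat_path /= => /and3P[path_A e_Ay _].
  by rewrite rcons_path rcons_path path_A e_Ay last_rcons e_sym.
Qed.

Lemma cactus_no_chord x A y B : uniq (x :: A ++ y :: B) -> cycle e (x :: A ++ y :: B) ->
  e x y -> A != [::] -> B != [::] -> False.
Proof.
move=> uniq_s cycle_s e_xy nA nB.
have rot_s : rot (size (x :: A)) (x :: A ++ y :: B) = y :: B ++ x :: A.
  by rewrite -cat_cons rot_size_cat.
have c1 := chord_cycle uniq_s cycle_s e_xy nA.
have c2 : simple_cycle e (y :: rcons B x).
  by apply: (chord_cycle (B := A)) nB; rewrite -?rot_s ?rot_uniq ?rot_cycle // e_sym.
have neq_xy := edge_neq e_xy.
have [a aA] : exists a, a \in A.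
  by case: A {uniq_s cycle_s rot_s c1} nA => // a A; exists a; rewrite inE eqxx.
have /negP[] : a \notin y :: rcons B x.
  have : uniq ((y :: rcons B x) ++ A) by rewrite cat_cons cat_rcons -rot_s rot_uniq.
  by rewrite cat_uniq => /and3P[_ /hasPn/(_ a aA)].
have sub : {subset x :: rcons A y <= y :: rcons B x}.
  by apply: (cactus_cycles_sub c1 c2 neq_xy); rewrite !(inE, mem_rcons, eqxx, orbT).
by apply: sub; rewrite inE mem_rcons inE aA !orbT.
Qed.

Lemma cycle_nth x0 s i : cycle e s -> i < size s ->
  e (nth x0 s i) (nth x0 s (i.+1 %% size s)).
Proof.
case: s => [//|y s] /(pathP x0)/(_ i) + lt_is; rewrite size_rcons => /(_ lt_is).
rewrite -rcons_cons nth_rcons lt_is nth_rcons /=.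
have [lt_i|ge_i] := ltnP i (size s); first by rewrite modn_small.
have -> : i = size s by move: lt_is; rewrite /=; lia.
by rewrite eqxx modnn.
Qed.

Lemma cactus_cycle_adj x0 s i j : uniq s -> cycle e s -> i < j -> j < size s ->
  e (nth x0 s i) (nth x0 s j) -> (j == i.+1) || (i == 0) && (j == (size s).-1).
Proof.
move=> uniq_s cycle_s lt_ij lt_js e_ij; apply/negPn/negP.
rewrite negb_or negb_and => /andP[nA nB].
set A := take (j - i.+1) (drop i.+1 s).
set B := drop j.+1 s ++ take i s.
have rot_s : rot i s = nth x0 s i :: A ++ nth x0 s j :: B.
  rewrite /rot (drop_nth x0) ?(ltn_trans lt_ij) //.
  rewrite -[drop i.+1 s](cat_take_drop (j - i.+1)) drop_drop subnK //.
  by rewrite [drop j s](drop_nth x0) // /B cat_cons -catA.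
have size_A : size A = j - i.+1 by rewrite size_takel // size_drop; lia.
have size_B : size B = size s - j.+1 + i.
  by rewrite size_cat size_drop size_takel //; lia.
apply: (cactus_no_chord (A := A) (B := B) _ _ e_ij); rewrite -?rot_s ?rot_uniq ?rot_cycle //.
  by rewrite -size_eq0 size_A; lia.
by rewrite -size_eq0 size_B; lia.
Qed.

Lemma cactus_cycle_induced s : uniq s -> cycle e s -> 1 < size s ->
  induced_sub (Cr_rel (r := size s)) e.
Proof.
case: s => [//|x0 s'] uniq_s cycle_s size_gt1.
set s := x0 :: s' in uniq_s cycle_s size_gt1 *.
pose f (i : 'I_(size s)) := nth x0 s i.
exists f; split=> [i j /eqP|]; first by rewrite nth_uniq // => /eqP/val_inj.
have Cr_sym : symmetric (Cr_rel (r := size s)) by move=> i j; rewrite /Cr_rel orbC.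
have adj (i j : 'I_(size s)) : i < j -> e (f i) (f j) = Cr_rel i j.
  move=> lt_ij; apply/idP/idP => [|]; last first.
    by rewrite /Cr_rel /f => /orP[] /eqP <-; [|rewrite e_sym]; apply: cycle_nth.
  case/(cactus_cycle_adj uniq_s cycle_s lt_ij (ltn_ord j))/orP.
    by move=> /eqP j_succ; rewrite /Cr_rel -j_succ modn_small ?eqxx // j_succ.
  case/andP=> /eqP i0 /eqP j_last.
  by rewrite /Cr_rel j_last prednK ?modnn ?i0 ?eqxx ?orbT //; lia.
move=> i j; case: (ltngtP i j) => [lt_ij|gt_ij|/val_inj <-]; first exact: adj.
  by rewrite e_sym Cr_sym adj.
by rewrite e_irr Cr_relE orbb (negbTE (iter_ordS_neq i (k := 1) _)) //; lia.
Qed.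

Hypothesis Cr_free : forall r, 4 <= r -> ~ induced_sub (Cr_rel (r := r)) e.

Lemma cactus_cycle_size s : uniq s -> cycle e s -> size s <= 3.
Proof.
move=> uniq_s cycle_s; rewrite leqNgt; apply/negP => size_ge4.
by apply: (Cr_free size_ge4); apply: cactus_cycle_induced => //; lia.
Qed.

End CactusCycles.

(** * Induced copies of M_2 and M_3 *)

Section ForbiddenPatterns.
Variables (T : finType) (e : rel T).
Hypotheses (e_sym : symmetric e) (e_irr : irreflexive e).

Lemma M2_rows (i j : 'I_7) : M2_rel i =1 M2_rel j -> i = j.
Proof.
move=> rows; apply: val_inj.
move: i j rows => -[[|[|[|[|[|[|[|//]]]]]]] ?] -[[|[|[|[|[|[|[|//]]]]]]] ?] rows //=;
first [ discriminate (rows (v7 0)) | discriminate (rows (v7 1)) | discriminate (rows (v7 2))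
      | discriminate (rows (v7 3)) | discriminate (rows (v7 4)) | discriminate (rows (v7 5))
      | discriminate (rows (v7 6)) ].
Qed.

Lemma M3_rows (i j : 'I_6) : M3_rel i =1 M3_rel j -> i = j.
Proof.
move=> rows; apply: val_inj.
move: i j rows => -[[|[|[|[|[|[|//]]]]]] ?] -[[|[|[|[|[|[|//]]]]]] ?] rows //=;
first [ discriminate (rows (v6 0)) | discriminate (rows (v6 1)) | discriminate (rows (v6 2))
      | discriminate (rows (v6 3)) | discriminate (rows (v6 4)) | discriminate (rows (v6 5)) ].
Qed.

Lemma induced_by_adjacency (U : finType) (h : rel U) (f : U -> T) :
  (forall i j, h i =1 h j -> i = j) -> (forall i j, e (f i) (f j) = h i j) -> induced_sub h e.
Proof.
move=> rows f_adj; exists f; split=> // i j eq_f.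
by apply: rows => k; rewrite -!f_adj eq_f.
Qed.

Lemma M3_induced v0 v1 v2 v3 v4 v5 :
  e v0 v1 -> e v0 v2 -> e v1 v2 -> e v0 v3 -> e v1 v4 -> e v2 v5 ->
  ~~ e v0 v4 -> ~~ e v0 v5 -> ~~ e v1 v3 -> ~~ e v1 v5 -> ~~ e v2 v3 -> ~~ e v2 v4 ->
  ~~ e v3 v4 -> ~~ e v3 v5 -> ~~ e v4 v5 -> induced_sub M3_rel e.
Proof.
move=> h01 h02 h12 h03 h14 h25 n04 n05 n13 n15 n23 n24 n34 n35 n45.
have adj := (h01, h02, h12, h03, h14, h25, negbTE n04, negbTE n05, negbTE n13, negbTE n15,
             negbTE n23, negbTE n24, negbTE n34, negbTE n35, negbTE n45).
apply: (induced_by_adjacency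
         (f := fun i : 'I_6 => nth v0 [:: v0; v1; v2; v3; v4; v5] i) M3_rows).
move=> -[[|[|[|[|[|[|//]]]]]] ?] -[[|[|[|[|[|[|//]]]]]] ?] /=;
  by rewrite ?e_irr ?adj // e_sym ?adj.
Qed.

Lemma M2_induced v0 v1 v2 v3 v4 v5 v6 :
  e v0 v1 -> e v0 v2 -> e v0 v3 -> e v1 v4 -> e v2 v5 -> e v3 v6 ->
  ~~ e v0 v4 -> ~~ e v0 v5 -> ~~ e v0 v6 -> ~~ e v1 v2 -> ~~ e v1 v3 -> ~~ e v1 v5 ->
  ~~ e v1 v6 -> ~~ e v2 v3 -> ~~ e v2 v4 -> ~~ e v2 v6 -> ~~ e v3 v4 -> ~~ e v3 v5 ->
  ~~ e v4 v5 -> ~~ e v4 v6 -> ~~ e v5 v6 -> induced_sub M2_rel e.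
Proof.
move=> h01 h02 h03 h14 h25 h36 n04 n05 n06 n12 n13 n15 n16 n23 n24 n26 n34 n35 n45 n46 n56.
have adj := (h01, h02, h03, h14, h25, h36, negbTE n04, negbTE n05, negbTE n06, negbTE n12,
             negbTE n13, negbTE n15, negbTE n16, negbTE n23, negbTE n24, negbTE n26,
             negbTE n34, negbTE n35, negbTE n45, negbTE n46, negbTE n56).
apply: (induced_by_adjacency
         (f := fun i : 'I_7 => nth v0 [:: v0; v1; v2; v3; v4; v5; v6] i) M2_rows).
move=> -[[|[|[|[|[|[|[|//]]]]]]] ?] -[[|[|[|[|[|[|[|//]]]]]]] ?] /=;
  by rewrite ?e_irr ?adj // e_sym ?adj.
Qed.

End ForbiddenPatterns.

(** * Breadth-first layers of a cactus *)

Section Distance.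
Variables (T : finType) (e : rel T).
Hypothesis e_conn : connected_graph e.

Fixpoint ball (x : T) n : {set T} :=
  if n is m.+1 then ball x m :|: [set z | [exists y in ball x m, e y z]] else [set x].

Lemma ball_mono x m n : m <= n -> ball x m \subset ball x n.
Proof.
elim: n => [|n IHn]; first by rewrite leqn0 => /eqP ->.
rewrite leq_eqVlt => /orP[/eqP -> //|/IHn sub_mn].
exact: subset_trans sub_mn (subsetUl _ _).
Qed.

Lemma ball_edge x n y z : y \in ball x n -> e y z -> z \in ball x n.+1.
Proof.
by move=> y_in e_yz; rewrite !inE; apply/orP; right; apply/existsP; exists y; rewrite y_in.
Qed.

Lemma ball_path x p : path e x p -> last x p \in ball x (size p).
Proof.
elim/last_ind: p => [|p z IHp]; first by rewrite inE.
by rewrite rcons_path last_rcons size_rcons => /andP[/IHp]; apply: ball_edge.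
Qed.

Lemma ball_exhaust x y : exists n, y \in ball x n.
Proof. by case/connectP: (e_conn x y) => p /ball_path + ->; exists (size p). Qed.

Definition dist x y := ex_minn (ball_exhaust x y).

Lemma mem_ball x y n : (y \in ball x n) = (dist x y <= n).
Proof.
rewrite /dist; case: ex_minnP => m y_in min_m; apply/idP/idP; first exact: min_m.
by move=> le_mn; apply: (subsetP (ball_mono x le_mn)).
Qed.

Lemma dist_eq0 x y : (dist x y == 0) = (y == x).
Proof. by rewrite -leqn0 -mem_ball inE. Qed.

Lemma dist_edge x y z : e y z -> dist x z <= (dist x y).+1.
Proof. by move=> e_yz; rewrite -mem_ball; apply: ball_edge e_yz; rewrite mem_ball. Qed.

Lemma dist_pred x z n : dist x z = n.+1 -> exists2 y, e y z & dist x y = n.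
Proof.
move=> dist_z; have := leqnn (dist x z).
rewrite -{1}mem_ball dist_z /= !inE mem_ball dist_z ltnn /=.
case/existsP=> y /andP[]; rewrite mem_ball => le_yn e_yz; exists y => //.
by apply/eqP; rewrite eqn_leq le_yn -ltnS -dist_z dist_edge.
Qed.

Lemma dist_lipschitz (f : T -> int) : (forall u v, e u v -> f v <= f u + 1)%R ->
  forall x y, (f y <= f x + (dist x y)%:Z)%R.
Proof.
move=> f_lip x y; suff f_ball n z : z \in ball x n -> (f z <= f x + n%:Z)%R.
  by apply/f_ball; rewrite mem_ball.
elim: n z => [|n IHn] z /=; first by rewrite inE => /eqP ->; lia.
rewrite !inE => /orP[/IHn|/existsP[w /andP[/IHn f_w /f_lip]]]; lia.
Qed.

Lemma diametral_pair (x0 : T) : exists a b, forall x y, dist x y <= dist a b.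
Proof.
exists [arg max_(p > (x0, x0)) dist p.1 p.2].1, [arg max_(p > (x0, x0)) dist p.1 p.2].2.
by move=> x y; case: arg_maxnP => // p _ /(_ (x, y)); apply.
Qed.

End Distance.

Lemma lex_le (M a1 r1 a2 r2 : nat) : r1 < M -> r2 < M ->
  a1 * M + r1 <= a2 * M + r2 -> a1 <= a2 /\ (a1 = a2 -> r1 <= r2).
Proof.
move=> lt_r1 lt_r2 le_12; split=> [|eq_a]; last by move: le_12; rewrite eq_a; lia.
rewrite leqNgt; apply/negP => lt_a; have := leq_mul lt_a (leqnn M); rewrite mulSn; lia.
Qed.

Section CactusBFS.
Variables (T : finType) (e : rel T).
Hypotheses (e_sym : symmetric e) (e_irr : irreflexive e) (e_conn : connected_graph e).
Hypothesis cactus_cycles : forall s1 s2 : seq T, simple_cycle e s1 -> simple_cycle e s2 ->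
  cycle_edges s1 != cycle_edges s2 -> #|[set x | (x \in s1) && (x \in s2)]| <= 1.
Hypothesis Cr_free : forall r, 4 <= r -> ~ induced_sub (Cr_rel (r := r)) e.
Variable a : T.

Definition depth x := dist e_conn a x.
Definition parent x := odflt x [pick y | e y x && (depth y == (depth x).-1)].
Definition ancestor k x := iter k parent x.

Lemma depth_eq0 x : (depth x == 0) = (x == a).
Proof. exact: dist_eq0. Qed.

Lemma depth_edge u v : e u v -> depth v <= (depth u).+1.
Proof. exact: dist_edge. Qed.

Lemma parent_spec x : 0 < depth x -> e (parent x) x /\ (depth (parent x)).+1 = depth x.
Proof.
move=> depth_gt0; rewrite /parent; case: pickP => [y /andP[e_yx /eqP ->]|none].
  by rewrite prednK.
have [y e_yx depth_y] := @dist_pred _ _ e_conn a x (depth x).-1 (esym (prednK depth_gt0)).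
by have := none y; rewrite e_yx /depth depth_y eqxx.
Qed.

Lemma edge_parent x : 0 < depth x -> e (parent x) x.
Proof. by case/parent_spec. Qed.

Lemma depth_parent x : 0 < depth x -> (depth (parent x)).+1 = depth x.
Proof. by case/parent_spec. Qed.

Lemma depth_ancestor k x : k <= depth x -> depth (ancestor k x) = depth x - k.
Proof.
elim: k => [|k IHk] le_kx; first by rewrite subn0.
have depth_gt0 : 0 < depth (ancestor k x) by rewrite IHk; lia.
rewrite /ancestor iterS -/(ancestor k x); have := depth_parent depth_gt0; rewrite IHk; lia.
Qed.

Lemma ancestor_depth x : ancestor (depth x) x = a.
Proof. by apply/eqP; rewrite -depth_eq0 depth_ancestor ?subnn. Qed.

Lemma depth_traject_parent u n y : n <= (depth u).+1 -> y \in traject parent u n ->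
  exists2 i, i < n & depth y = depth u - i /\ y = ancestor i u.
Proof. by move=> le_n /trajectP[i lt_in ->]; exists i; rewrite ?depth_ancestor //; lia. Qed.

Lemma uniq_traject_parent u n : n <= (depth u).+1 -> uniq (traject parent u n).
Proof.
elim: n u => [//|[|n] IHn] u le_n //; have depth_gt0 : 0 < depth u by lia.
have le_n' : n.+1 <= (depth (parent u)).+1 by rewrite depth_parent.
rewrite trajectS cons_uniq IHn // andbT.
apply/negP => /(depth_traject_parent le_n')[i _ [depth_u _]].
by have := depth_parent depth_gt0; lia.
Qed.

Lemma path_traject_parent u n : n <= depth u -> path e u (traject parent (parent u) n).
Proof.
elim: n u => [//|n IHn] u le_n; have depth_gt0 : 0 < depth u by lia.
by rewrite trajectS /= e_sym edge_parent // IHn // -ltnS depth_parent.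
Qed.

Lemma path_rev_traject_parent v n : n <= depth v ->
  path e (ancestor n v) (rev (traject parent v n)).
Proof.
move=> le_n; have := path_traject_parent le_n.
rewrite (eq_path (e' := fun y z => e z y)) => [|y z]; last exact: e_sym.
rewrite -rev_path last_traject; congr (path _ _ (rev _)).
by elim: n v {le_n} => //= n IHn v; rewrite IHn.
Qed.

Lemma common_ancestor u v : depth u = depth v ->
  exists k, ancestor k u = ancestor k v /\ forall i, i < k -> ancestor i u != ancestor i v.
Proof.
move=> eq_depth; have ex_k : exists k, ancestor k u == ancestor k v.
  by exists (depth u); rewrite ancestor_depth eq_depth ancestor_depth.
case: (ex_minnP ex_k) => k /eqP eq_k min_k; exists k; split=> // i lt_ik.
by apply/negP => /min_k; rewrite leqNgt lt_ik.
Qed.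

Lemma ancestor_cycle_bound u v X k : u != v -> depth u = depth v ->
  path e v (rcons X u) -> uniq X -> all (fun x => depth u < depth x) X ->
  ancestor k u = ancestor k v -> (forall i, i < k -> ancestor i u != ancestor i v) ->
  2 * k + size X <= 2.
Proof.
move=> neq_uv eq_depth path_X uniq_X deep_X meet_k below_k.
have k_gt0 : 0 < k.
  by case: k meet_k {below_k} => // /= eq_uv; rewrite eq_uv eqxx in neq_uv.
have le_ku : k <= depth u.
  rewrite leqNgt; apply/negP => /below_k.
  by rewrite ancestor_depth eq_depth ancestor_depth eqxx.
have up_u y : y \in traject parent u k.+1 ->
    exists2 i, i <= k & depth y = depth u - i /\ y = ancestor i u.
  by move/depth_traject_parent; apply; rewrite ltnS.
have up_v y : y \in traject parent v k ->
    exists2 i, i < k & depth y = depth u - i /\ y = ancestor i v.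
  by move/depth_traject_parent; rewrite eq_depth; apply; rewrite -eq_depth ltnW.
(* The cycle runs from v along X to u, up to the common ancestor and back down to v. *)
set s := X ++ traject parent u k.+1 ++ rev (traject parent v k).
have uniq_s : uniq s.
  rewrite /s cat_uniq uniq_X andTb; apply/andP; split.
    apply/hasPn => y; rewrite mem_cat mem_rev => /orP[/up_u|/up_v] [i _ [depth_y _]];
    by apply/negP => /(allP deep_X); rewrite depth_y; lia.
  have uniq_u : uniq (traject parent u k.+1) by apply: uniq_traject_parent; rewrite ltnS.
  have uniq_v : uniq (traject parent v k) by apply: uniq_traject_parent; rewrite -eq_depth ltnW.
  rewrite cat_uniq rev_uniq uniq_u uniq_v andbT andTb.
  apply/hasPn => y; rewrite mem_rev => /up_v[i lt_ik [depth_y y_eq]]; subst y.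
  apply/negP => /up_u[i' le_i'k [depth_y' eq_i]].
  have eq_ii' : i' = i by move: depth_y depth_y'; lia.
  by move: (below_k i lt_ik); rewrite eq_i eq_ii' eqxx.
have cycle_s : cycle e s.
  have last_s : last v s = v.
    by rewrite /s !last_cat -(prednK k_gt0) trajectS rev_cons last_rcons.
  rewrite (cycle_path v) last_s /s cat_path; move: path_X; rewrite rcons_path => /andP[-> e_Xu].
  rewrite trajectS /= e_Xu cat_path path_traject_parent // last_traject -/(ancestor k u) meet_k.
  by rewrite path_rev_traject_parent // -eq_depth.
have := cactus_cycle_size e_sym e_irr cactus_cycles Cr_free uniq_s cycle_s.
by rewrite /s !size_cat size_rev !size_traject; lia.
Qed.

Lemma parent_unique p x : e p x -> (depth p).+1 = depth x -> p = parent x.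
Proof.
move=> e_px depth_px; have depth_gt0 : 0 < depth x by rewrite -depth_px.
apply/eqP/negPn/negP => neq_p.
have eq_depth : depth p = depth (parent x) by apply: succn_inj; rewrite depth_px depth_parent.
have [k [meet_k below_k]] := common_ancestor eq_depth.
have := ancestor_cycle_bound neq_p eq_depth (X := [:: x]) _ isT _ meet_k below_k.
rewrite /= edge_parent // e_sym e_px -depth_px leqnn => /(_ isT isT) bound.
have k0 : k = 0 by lia.
by move: meet_k; rewrite k0 => /= eq_p; rewrite eq_p eqxx in neq_p.
Qed.

Lemma sibling_parent u v : e u v -> depth u = depth v -> parent u = parent v.
Proof.
move=> e_uv eq_depth; have neq_uv := edge_neq e_irr e_uv.
have [k [meet_k below_k]] := common_ancestor eq_depth.
have := ancestor_cycle_bound neq_uv eq_depth (X := [::]) _ isT isT meet_k below_k.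
rewrite /= e_sym e_uv => /(_ isT) bound.
have [k0|k1] : k = 0 \/ k = 1 by lia.
  by move: meet_k; rewrite k0 => /= eq_uv; rewrite eq_uv eqxx in neq_uv.
by move: meet_k; rewrite k1.
Qed.

Lemma depth_gap_nonadj u v : (depth u).+2 <= depth v -> ~~ e u v.
Proof. by move=> gap; apply/negP => /depth_edge; lia. Qed.

Lemma same_depth_neighbour_unique x y z : e x y -> e x z ->
  depth y = depth x -> depth z = depth x -> y = z.
Proof.
move=> e_xy e_xz depth_y depth_z; apply/eqP/negPn/negP => neq_yz.
have depth_gt0 : 0 < depth x.
  rewrite lt0n; apply: contraTneq e_xy => depth0.
  have /eqP -> : x == a by rewrite -depth_eq0 depth0.
  have /eqP -> : y == a by rewrite -depth_eq0 depth_y depth0.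
  by rewrite e_irr.
have [e_px depth_px] := parent_spec depth_gt0.
have triangle v : e x v -> depth v = depth x -> simple_cycle e [:: parent x; x; v].
  move=> e_xv depth_v; have e_pv : e (parent x) v.
    by rewrite (sibling_parent e_xv) ?depth_v // edge_parent // depth_v.
  split=> //=; last by rewrite e_px e_xv e_sym e_pv.
  by rewrite !inE negb_or (edge_neq e_irr e_px) (edge_neq e_irr e_pv) (edge_neq e_irr e_xv).
have sub : {subset [:: parent x; x; y] <= [:: parent x; x; z]}.
  apply: (cactus_cycles_sub cactus_cycles (triangle y e_xy depth_y) (triangle z e_xz depth_z)
           (edge_neq e_irr e_px)); by rewrite !inE eqxx ?orbT.
have : y \in [:: parent x; x; z] by apply: sub; rewrite !inE eqxx !orbT.
rewrite !inE => /or3P[/eqP y_parent|/eqP y_x|/eqP y_z].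
- by move: depth_px; rewrite -y_parent depth_y; lia.
- by rewrite y_x e_irr in e_xy.
- by rewrite y_z eqxx in neq_yz.
Qed.

Lemma edge_depth_cases u v : e u v ->
  [\/ depth v = (depth u).+1 /\ u = parent v, depth u = (depth v).+1 /\ v = parent u
    | depth u = depth v /\ parent u = parent v].
Proof.
move=> e_uv; have e_vu : e v u by rewrite e_sym.
have := depth_edge e_uv; have := depth_edge e_vu.
case: (ltngtP (depth u) (depth v)) => [lt_uv|gt_uv|eq_uv] le_vu le_uv.
- by constructor 1; split; [lia | apply: parent_unique => //; lia].
- by constructor 2; split; [lia | apply: parent_unique => //; lia].
- by constructor 3; split => //; apply: sibling_parent.
Qed.

Definition ancestor_at l x := ancestor (depth x - l) x.

Lemma ancestor_at_depth x : ancestor_at (depth x) x = x.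
Proof. by rewrite /ancestor_at subnn. Qed.

Lemma ancestor_at_parent l x : l < depth x -> ancestor_at l (parent x) = ancestor_at l x.
Proof.
move=> lt_lx; have depth_px := depth_parent (leq_ltn_trans (leq0n l) lt_lx).
rewrite /ancestor_at /ancestor; have -> : depth x - l = (depth (parent x) - l).+1 by lia.
by rewrite iterSr.
Qed.

Lemma ancestor_at_edge l u v : e u v -> l < depth u -> l <= depth v ->
  ancestor_at l u = ancestor_at l v.
Proof.
move=> e_uv lt_lu le_lv.
case: (edge_depth_cases e_uv) => [[depth_v u_eq]|[_ v_eq]|[eq_depth eq_parent]].
- by rewrite u_eq ancestor_at_parent // depth_v; lia.
- by rewrite v_eq ancestor_at_parent.
- by rewrite -ancestor_at_parent // eq_parent ancestor_at_parent // -eq_depth.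
Qed.

Definition in_subtree l (C : pred T) z := (l <= depth z) && C (ancestor_at l z).

Lemma subtree_boundary l C u v : e u v -> in_subtree l C u -> ~~ in_subtree l C v ->
  depth u = l /\ (depth v = l.-1 \/ [/\ depth v = l, C u & ~~ C v]).
Proof.
move=> e_uv /andP[le_lu C_u] out_v; have e_vu : e v u by rewrite e_sym.
have := depth_edge e_uv; have := depth_edge e_vu => le_uv le_vu.
have depth_u : depth u = l.
  apply/eqP; rewrite eqn_leq le_lu andbT leqNgt; apply/negP => lt_lu.
  have le_lv : l <= depth v by lia.
  by move: out_v; rewrite /in_subtree le_lv -(ancestor_at_edge e_uv lt_lu le_lv) C_u.
split=> //; case: (ltngtP (depth v) l) => [lt_vl|lt_lv|eq_vl]; first by left; lia.
  by move: out_v; rewrite /in_subtree (ltnW lt_lv) (ancestor_at_edge e_vu) ?depth_u // C_u.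
right; split=> //; first by rewrite -{1}depth_u ancestor_at_depth in C_u.
by move: out_v; rewrite /in_subtree eq_vl leqnn /= -{1}eq_vl ancestor_at_depth.
Qed.

Definition child p x := (parent x == p) && (depth x == (depth p).+1).

Lemma child_edge p x : child p x -> e p x.
Proof. by case/andP=> /eqP <- /eqP depth_x; apply: edge_parent; rewrite depth_x. Qed.

Definition has_child x := [exists y, child x y].

Definition fork w c1 c2 g1 g2 :=
  [&& c1 != c2, child w c1, child w c2, child c1 g1 & child c2 g2].

Lemma fork_nonadj w c1 c2 g1 g2 : fork w c1 c2 g1 g2 ->
  [&& ~~ e g1 g2, ~~ e c1 g2 & ~~ e c2 g1].
Proof.
case/and5P=> neq_c /andP[/eqP p_c1 /eqP d_c1] /andP[/eqP p_c2 /eqP d_c2].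
move=> /andP[/eqP p_g1 /eqP d_g1] /andP[/eqP p_g2 /eqP d_g2].
apply/and3P; split; apply/negP.
- move/sibling_parent; rewrite p_g1 p_g2 d_g1 d_g2 d_c1 d_c2 => /(_ erefl) eq_c.
  by rewrite eq_c eqxx in neq_c.
- move/parent_unique; rewrite p_g2 d_g2 d_c1 d_c2 => /(_ erefl) eq_c.
  by rewrite eq_c eqxx in neq_c.
- move/parent_unique; rewrite p_g1 d_g1 d_c1 d_c2 => /(_ erefl) eq_c.
  by rewrite eq_c eqxx in neq_c.
Qed.

Lemma parent_ancestor k x : parent (ancestor k x) = ancestor k.+1 x.
Proof. by rewrite /ancestor iterS. Qed.

Lemma ancestor_parent k x : ancestor k (parent x) = ancestor k.+1 x.
Proof. by rewrite /ancestor iterSr. Qed.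

Lemma two_branches_fork x y x' y' : x != y -> depth x = depth y -> child x x' -> child y y' ->
  exists w c1 c2 g1 g2, fork w c1 c2 g1 g2.
Proof.
move=> neq_xy eq_depth /andP[/eqP p_x' /eqP d_x'] /andP[/eqP p_y' /eqP d_y'].
have [[|j] [meet below]] := common_ancestor eq_depth.
  by move: meet => /= eq_xy; rewrite eq_xy eqxx in neq_xy.
have le_jx : j < depth x.
  rewrite ltnNge; apply/negP => le_xj; have /below : depth x < j.+1 by [].
  by rewrite ancestor_depth eq_depth ancestor_depth eqxx.
have anc_child z : j < depth z -> child (ancestor j.+1 z) (ancestor j z).
  by move=> lt_jz; rewrite /child parent_ancestor eqxx !depth_ancestor //=; apply/eqP; lia.
have anc_x' : ancestor j.+1 x' = ancestor j x by rewrite -ancestor_parent p_x'.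
have anc_y' : ancestor j.+1 y' = ancestor j y by rewrite -ancestor_parent p_y'.
exists (ancestor j.+1 x), (ancestor j x), (ancestor j y), (ancestor j x'), (ancestor j y').
rewrite /fork below // anc_child // meet anc_child -?eq_depth // -anc_x' -anc_y'.
by rewrite !anc_child // ?d_x' ?d_y' -?eq_depth ltnS ltnW.
Qed.

Variable b : T.
Hypothesis diametral : forall x y, dist e_conn x y <= depth b.

Lemma boundary_depth_contra (S : pred T) (K : int) g : S g -> ~~ S b -> (K < (depth g)%:Z)%R ->
  (forall u v, e u v -> S u -> ~~ S v ->
     (K - 1 <= (depth u)%:Z + (depth v)%:Z)%R /\ ((depth u)%:Z + (depth v)%:Z <= K + 1)%R) ->
  False.
Proof.
move=> S_g S_b K_lt boundary.
(* f changes by at most 1 along edges, so f b <= f g + dist g b, and dist g b <= depth b. *)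
pose f z : int := if S z then (K - (depth z)%:Z)%R else ((depth z)%:Z)%R.
have f_lip u v : e u v -> (f v <= f u + 1)%R.
  move=> e_uv; have e_vu : e v u by rewrite e_sym.
  have := depth_edge e_uv; have := depth_edge e_vu; rewrite /f.
  case S_u: (S u); case S_v: (S v) => // le_uv le_vu; try lia.
    by have [] := boundary u v e_uv S_u (negbT S_v); lia.
  by have [] := boundary v u e_vu S_v (negbT S_u); lia.
have := dist_lipschitz e_conn f_lip g b; rewrite /f S_g (negbTE S_b).
by have := diametral g b; lia.
Qed.

Lemma fork_root_contra w c1 c2 g1 g2 : fork w c1 c2 g1 g2 -> depth w = 0 -> False.
Proof.
case/and5P=> neq_c /andP[_ /eqP d_c1] /andP[_ /eqP d_c2].
move=> /andP[/eqP p_g1 /eqP d_g1] /andP[/eqP p_g2 /eqP d_g2] d_w.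
pose S c := in_subtree 1 (pred1 c).
have cut c g : parent g = c -> depth g = 2 -> ~~ S c b -> False.
  move=> p_g d_g out_b; have S_g : S c g by rewrite /S /in_subtree /ancestor_at d_g /= p_g eqxx.
  apply: (boundary_depth_contra (K := 1) S_g out_b); first by rewrite d_g.
  move=> u v e_uv in_u out_v; have [d_u d_v] := subtree_boundary e_uv in_u out_v.
  by case: d_v => [|[]] d_v; rewrite d_u d_v; lia.
have : ~~ S c1 b || ~~ S c2 b.
  rewrite -negb_and; apply: contra neq_c => /andP[/andP[_ /eqP <-] /andP[_ /eqP <-]].
  by [].
by case/orP=> [/(cut c1 g1)|/(cut c2 g2)]; apply; rewrite // ?d_g1 ?d_g2 ?d_c1 ?d_c2 d_w.
Qed.

Lemma fork_low_contra w c1 c2 g1 g2 : fork w c1 c2 g1 g2 -> ~~ e c1 c2 -> depth w <= 1 -> False.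
Proof.
case/and5P=> neq_c /andP[_ /eqP d_c1] /andP[_ /eqP d_c2].
move=> /andP[/eqP p_g1 /eqP d_g1] /andP[/eqP p_g2 /eqP d_g2] n_c12 d_w.
(* With its layer neighbour added, the subtree of c is left only towards the parent layer. *)
pose N c z := (z == c) || e c z && (depth z == depth c).
pose S c := in_subtree (depth c) (N c).
have N_mate c u v : N c u -> e u v -> depth v = depth u -> depth u = depth c -> N c v.
  move=> /orP[/eqP -> e_cv d_v _|/andP[e_cu /eqP d_u] e_uv d_v _].
    by rewrite /N e_cv d_v eqxx orbT.
  by rewrite /N (same_depth_neighbour_unique e_uv (_ : e u c)) ?eqxx // e_sym.
have cut c g : parent g = c -> depth g = (depth c).+1 -> depth c = (depth w).+1 ->
    ~~ S c b -> False.
  move=> p_g d_g d_c out_b; have S_g : S c g.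
    by rewrite /S /in_subtree /ancestor_at d_g leqnSn subSnn /= p_g /N eqxx.
  apply: (boundary_depth_contra (K := (2 * (depth w)%:Z)%R) S_g out_b).
    by rewrite d_g d_c; lia.
  move=> u v e_uv in_u out_v; have [d_u [d_v|[d_v N_u N_v]]] := subtree_boundary e_uv in_u out_v.
    by rewrite d_u d_v d_c; lia.
  by move: N_v; rewrite (N_mate c u v N_u e_uv) // d_v d_u.
have : ~~ S c1 b || ~~ S c2 b.
  rewrite -negb_and /S /in_subtree d_c1 d_c2; apply/negP => /andP[/andP[_ N1] /andP[_ N2]].
  move: N1 N2; rewrite /N d_c1 d_c2; set m := ancestor_at _ b.
  case/orP=> [/eqP m1|/andP[e1 /eqP dm1]]; case/orP=> [/eqP m2|/andP[e2 /eqP dm2]].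
  - by rewrite -m1 -m2 eqxx in neq_c.
  - by move: e2; rewrite m1 e_sym (negbTE n_c12).
  - by move: e1; rewrite m2 (negbTE n_c12).
  - have eq_c : c1 = c2.
      by apply: (same_depth_neighbour_unique (x := m)); rewrite 1?e_sym // ?d_c1 ?d_c2 ?dm1.
    by rewrite eq_c eqxx in neq_c.
by case/orP=> [/(cut c1 g1)|/(cut c2 g2)]; apply; rewrite // ?d_g1 ?d_g2 ?d_c1 ?d_c2.
Qed.

Hypothesis M2_free : ~ induced_sub M2_rel e.
Hypothesis M3_free : ~ induced_sub M3_rel e.

Lemma fork_M3 w c1 c2 g1 g2 : fork w c1 c2 g1 g2 -> e c1 c2 -> 0 < depth w -> False.
Proof.
move=> fork_w e_c12 d_w; have /and3P[n_g12 n_c1g2 n_c2g1] := fork_nonadj fork_w.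
case/and5P: fork_w => _ c_c1 c_c2 c_g1 c_g2.
move: (c_c1) (c_c2) (c_g1) (c_g2) => /andP[_ /eqP d_c1] /andP[_ /eqP d_c2].
move=> /andP[_ /eqP d_g1] /andP[_ /eqP d_g2]; have d_pw := depth_parent d_w.
apply: M3_free; apply: (@M3_induced T e e_sym e_irr w c1 c2 (parent w) g1 g2).
all: first [ exact: child_edge | done | by rewrite e_sym edge_parent
           | by apply: depth_gap_nonadj; rewrite ?d_g1 ?d_g2 ?d_c1 ?d_c2; lia
           | by rewrite e_sym; apply: depth_gap_nonadj; rewrite ?d_g1 ?d_g2 ?d_c1 ?d_c2; lia ].
Qed.

Lemma fork_M2 w c1 c2 g1 g2 : fork w c1 c2 g1 g2 -> ~~ e c1 c2 -> 1 < depth w -> False.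
Proof.
move=> fork_w n_c12 d_w; have /and3P[n_g12 n_c1g2 n_c2g1] := fork_nonadj fork_w.
case/and5P: fork_w => _ c_c1 c_c2 c_g1 c_g2.
move: (c_c1) (c_c2) (c_g1) (c_g2) => /andP[_ /eqP d_c1] /andP[_ /eqP d_c2].
move=> /andP[_ /eqP d_g1] /andP[_ /eqP d_g2]; have d_pw := depth_parent (ltnW d_w).
have d_ppw : 0 < depth (parent w) by lia.
have d_ppw' := depth_parent d_ppw.
apply: M2_free; apply: (@M2_induced T e e_sym e_irr w c1 c2 (parent w) g1 g2 (parent (parent w))).
all: first [ exact: child_edge | done | by rewrite e_sym edge_parent //; lia
           | by apply: depth_gap_nonadj; rewrite ?d_g1 ?d_g2 ?d_c1 ?d_c2; lia
           | by rewrite e_sym; apply: depth_gap_nonadj; rewrite ?d_g1 ?d_g2 ?d_c1 ?d_c2; lia ].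
Qed.

Lemma has_child_unique x y : has_child x -> has_child y -> depth x = depth y -> x = y.
Proof.
move=> /existsP[x' c_x'] /existsP[y' c_y'] eq_depth; apply/eqP/negPn/negP => neq_xy.
have [w [c1 [c2 [g1 [g2 fork_w]]]]] := two_branches_fork neq_xy eq_depth c_x' c_y'.
have [d_w0|d_w_gt0] := posnP (depth w); first exact: fork_root_contra fork_w d_w0.
have [e_c12|n_c12] := boolP (e c1 c2); first exact: fork_M3 fork_w e_c12 d_w_gt0.
have [d_w1|d_w_gt1] := leqP (depth w) 1; first exact: fork_low_contra fork_w n_c12 d_w1.
exact: fork_M2 fork_w n_c12 d_w_gt1.
Qed.

Definition mate x y := e x y && (depth y == depth x).

Definition partner x := odflt x [pick y | mate x y].

Lemma mate_sym x y : mate x y = mate y x.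
Proof. by rewrite /mate e_sym eq_sym. Qed.

Lemma mate_unique x y z : mate x y -> mate x z -> y = z.
Proof.
case/andP=> e_xy /eqP d_y /andP[e_xz /eqP d_z].
exact: same_depth_neighbour_unique e_xy e_xz d_y d_z.
Qed.

Lemma partner_mate x y : mate x y -> partner x = y.
Proof.
by move=> m_xy; rewrite /partner; case: pickP => [z /(mate_unique m_xy) //|/(_ y)]; rewrite m_xy.
Qed.

Lemma partnerP x : mate x (partner x) \/ partner x = x.
Proof. by rewrite /partner; case: pickP => [y m_xy|_]; [left | right]. Qed.

Lemma partnerK : involutive partner.
Proof.
move=> x; case: (partnerP x) => [m_xp|px_x]; last by rewrite !px_x.
by apply: partner_mate; rewrite mate_sym.
Qed.

Lemma depth_partner x : depth (partner x) = depth x.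
Proof. by case: (partnerP x) => [/andP[_ /eqP]|->]. Qed.

Lemma partner_adj x : partner x != x -> e x (partner x).
Proof. by case: (partnerP x) => [/andP[]|->]; rewrite ?eqxx. Qed.

Definition special x := has_child x || has_child (partner x).
Definition rank (x : T) : nat := enum_rank x.
Definition group x := if special x then #|T| else minn (rank x) (rank (partner x)).
(* Lexicographic in (depth, group, rank); group is #|T| for the vertex with children and its
   layer neighbour, which thus come last in their layer. *)
Definition pos x := (depth x * #|T|.+1 + group x) * #|T|.+1 + rank x.

Lemma rank_lt x : rank x < #|T|.
Proof. exact: ltn_ord. Qed.

Lemma rank_inj : injective rank.
Proof. by move=> x y /val_inj/enum_rank_inj. Qed.

Lemma group_le x : group x <= #|T|.
Proof. by rewrite /group; case: ifP => // _; rewrite geq_min ltnW ?rank_lt. Qed.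

Lemma group_partner x : group (partner x) = group x.
Proof. by rewrite /group /special partnerK orbC minnC. Qed.

Lemma partner_cases_adj x y : x != y ->
  [\/ x = partner y, partner x = y | partner x = partner y] -> e x y.
Proof.
move=> neq_xy [x_py|px_y|/(can_inj partnerK) eq_xy]; last by rewrite eq_xy eqxx in neq_xy.
  by rewrite x_py e_sym partner_adj // -x_py.
by rewrite -px_y partner_adj // px_y eq_sym.
Qed.

Lemma group_eq_adj x y : x != y -> depth x = depth y -> group x = group y -> e x y.
Proof.
move=> neq_xy d_xy eq_group; apply: (partner_cases_adj neq_xy); move: eq_group.
rewrite /group /special; case: ifP => [/orP sp_x|nsp_x]; case: ifP => [/orP sp_y|nsp_y].
  case: sp_x => [c_x|c_px]; case: sp_y => [c_y|c_py].
  + by rewrite (has_child_unique c_x c_y d_xy) eqxx in neq_xy.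
  + by constructor 1; apply: has_child_unique; rewrite ?depth_partner.
  + by constructor 2; apply: has_child_unique; rewrite ?depth_partner.
  + by constructor 3; apply: has_child_unique; rewrite ?depth_partner.
- by move=> eq_g; have := geq_minl (rank y) (rank (partner y)); rewrite -eq_g leqNgt rank_lt.
- by move=> eq_g; have := geq_minl (rank x) (rank (partner x)); rewrite eq_g leqNgt rank_lt.
- have minn_cases m n : minn m n = m \/ minn m n = n by rewrite /minn; case: ifP; [left | right].
  case: (minn_cases (rank x) (rank (partner x))) => ->.
  all: case: (minn_cases (rank y) (rank (partner y))) => -> /rank_inj eq_r.
  + by rewrite eq_r eqxx in neq_xy.
  + by constructor 1.
  + by constructor 2.
  + by constructor 3.
Qed.

Lemma pos_lex x y : pos x <= pos y ->
  depth x <= depth y /\ (depth x = depth y -> group x <= group y).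
Proof.
have lt_g z : group z < #|T|.+1 by rewrite ltnS group_le.
have lt_r z : rank z < #|T|.+1 by rewrite ltnS ltnW ?rank_lt.
case/(lex_le (lt_r x) (lt_r y)) => /(lex_le (lt_g x) (lt_g y)) [le_d le_g] _.
by split=> // eq_d; apply: le_g; rewrite eq_d.
Qed.

Lemma pos_inj : injective pos.
Proof.
move=> x y eq_pos; apply: rank_inj.
have rankE z : rank z = pos z %% #|T|.+1 by rewrite /pos modnMDl modn_small // ltnS ltnW ?rank_lt.
by rewrite !rankE eq_pos.
Qed.

Lemma umbrella_pos i j k : pos i < pos j -> pos j < pos k -> e i k -> e i j.
Proof.
move=> lt_ij lt_jk e_ik; have neq_ij : i != j by apply: contraTneq lt_ij => ->; rewrite ltnn.
have [le_dij le_gij] := pos_lex (ltnW lt_ij); have [le_djk le_gjk] := pos_lex (ltnW lt_jk).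
case: (edge_depth_cases e_ik) => [[d_k i_pk]|[d_i _]|[d_ik p_ik]]; last 2 first.
- by move: le_dij le_djk; rewrite d_i; lia.
- have d_j : depth i = depth j by lia.
  apply: group_eq_adj => //; apply/eqP; rewrite eqn_leq le_gij //=.
  have -> : group i = group k.
    by rewrite -(partner_mate (_ : mate i k)) ?group_partner // /mate e_ik d_ik eqxx.
  by apply: le_gjk; rewrite -d_j.
have hc_i : has_child i by apply/existsP; exists k; rewrite /child -i_pk d_k !eqxx.
have [d_j|d_j] : depth j = depth k \/ depth i = depth j by lia.
  have d_j_gt0 : 0 < depth j by rewrite d_j d_k.
  have hc_pj : has_child (parent j).
    by apply/existsP; exists j; rewrite /child depth_parent // !eqxx.
  rewrite (has_child_unique hc_i hc_pj) ?edge_parent //.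
  by apply: succn_inj; rewrite depth_parent // d_j d_k.
apply: group_eq_adj => //; apply/eqP; rewrite eqn_leq le_gij //=.
have -> : group i = #|T| by rewrite /group /special hc_i.
exact: group_le.
Qed.

Lemma cactus_B0 : B0 e.
Proof. exact: umbrella_B0 e_sym pos_inj umbrella_pos. Qed.

End CactusBFS.

Theorem theorem5p7 (T : finType) (e : rel T) :
  cactus e ->
  (B0 e <->
   [/\ ~ induced_sub M2_rel e,
       ~ induced_sub M3_rel e &
       forall r : nat, (4 <= r)%N -> ~ induced_sub (Cr_rel (r:=r)) e]).
Proof.
case=> [[e_sym e_irr] e_conn cactus_cycles]; split; first exact: B0_forbidden_free.
case=> M2_free M3_free Cr_free.
have [x0 _|T_empty] := pickP (@predT T); last first.
  by exists (fun=> StraightPath (0%R, 0%R) false 1); split=> // u; have := T_empty u.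
have [a [b diametral]] := diametral_pair e_conn x0.
exact: (cactus_B0 e_sym e_irr cactus_cycles Cr_free diametral M2_free M3_free).
Qed.
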